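(* Let $G$ be a finite simple graph, $s\ge1$, $e_1,\dots,e_s$ edges of $G$ (repetitions allowed). Suppose $u=p_0,p_1,\dots,p_{2k+1}=v$ is an even-connection between $u$ and $v$ and $z=q_0,q_1,\dots,q_{2l+1}=w$ is an even-connection between $z$ and $w$, both with respect to $e_1\cdots e_s$. If for some $0\le i\le k-1$ and $0\le j\le l-1$ the edges $p_{2i+1}p_{2i+2}$ and $q_{2j+1}q_{2j+2}$ have a common vertex, then $u$ is even-connected to $z$ or to $w$ with respect to $e_1\cdots e_s$, and $v$ is even-connected to $z$ or to $w$ with respect to $e_1\cdots e_s$.
   Context: Edges are identified with monomials. An even-connection between $u$ and $v$ (possibly equal) with respect to $e_1,\dots,e_s$ is a sequence of vertices $p_0,\dots,p_{2k+1}$, $k\ge1$ (repeats allowed), with (1) $p_0=u$, $p_{2k+1}=v$; (2) for all $0\le l\le k-1$, $p_{2l+1}p_{2l+2}=e_i$ for some $i$; (3) for every $i$, $|\{l\ge0: p_{2l+1}p_{2l+2}=e_i\}|\le|\{j: e_j=e_i\}|$; (4) each $p_rp_{r+1}$, $0\le r\le 2k$, is an edge of $G$. $u,v$ are even-connected if such a sequence exists. *)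

From mathcomp Require Import all_boot.
Set Implicit Arguments. Unset Strict Implicit. Unset Printing Implicit Defensive.

Definition simple_graph (V : finType) (G : rel V) : Prop :=
  symmetric G /\ irreflexive G.

(* Edges are identified with (squarefree degree-2) monomials, i.e. unordered
   pairs: (a,b) and (c,d) denote the same edge iff {a,b} = {c,d}. *)
Definition edge_eq (V : eqType) (e f : V * V) : bool :=
  ((e.1 == f.1) && (e.2 == f.2)) || ((e.1 == f.2) && (e.2 == f.1)).

(* The "odd" edge p_{2l+1} p_{2l+2} of a sequence p (defaults never used
   inside the range). *)
Definition odd_edge (V : Type) (x0 : V) (p : seq V) (l : nat) : V * V :=
  (nth x0 p (2 * l + 1), nth x0 p (2 * l + 2)).

Definition even_connection (V : finType) (G : rel V) (es : seq (V * V))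
    (u v : V) (k : nat) (p : seq V) : Prop :=
  1 <= k /\
  size p = 2 * k + 2 /\
  nth u p 0 = u /\ nth u p (2 * k + 1) = v /\
  (forall l, l < k -> has (edge_eq (odd_edge u p l)) es) /\
  (forall i, i < size es ->
     count (fun l => edge_eq (odd_edge u p l) (nth (pair u u) es i)) (iota 0 k)
     <= count (edge_eq (nth (pair u u) es i)) es) /\
  (forall r, r < 2 * k + 1 -> G (nth u p r) (nth u p r.+1)).

Definition even_connected (V : finType) (G : rel V) (es : seq (V * V))
    (u v : V) : Prop :=
  exists k p, @even_connection V G es u v k p.

Definition share_vertex (V : eqType) (e f : V * V) : bool :=
  [|| e.1 == f.1, e.1 == f.2, e.2 == f.1 | e.2 == f.2].

(* Encode an even-connection by the list of its odd edges: it is a walk whose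
   odd edges, identified up to orientation, form a submultiset of e_1 ... e_s.
   Let f be the first odd edge of the connection from u that shares a vertex with
   an odd edge h of the second connection.  If f meets h in its first vertex,
   follow the first connection up to f and continue along the second one from h
   (towards z or w according to the orientation of h); otherwise walk through f
   and then along the second connection from its second vertex.  The odd edges
   used before f do not touch the second connection at all, and neither does the
   first vertex of f in the second case, so no edge is taken from both
   connections and the multiplicity bound survives.  Reversing the first
   connection gives the statement for v. *)

From mathcomp Require Import all_boot.
Set Implicit Arguments. Unset Strict Implicit. Unset Printing Implicit Defensive.

Lemma split_find (T : Type) (a : pred T) s :
  has a s -> exists s1 x s2, [/\ s = s1 ++ x :: s2, a x & ~~ has a s1].
Proof.
elim: s => //= x s IHs; case ax: (a x) => /=; first by exists [::], x, s.
by case/IHs=> s1 [y [s2 [-> ay s1a]]]; exists (x :: s1), y, s2; rewrite /= ax.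
Qed.

Section EdgeClasses.

Variable V : eqType.
Implicit Types (x : V) (e f g h : V * V) (E A B : seq (V * V)).

Lemma edge_eq_refl e : edge_eq e e.
Proof. by rewrite /edge_eq !eqxx. Qed.

Lemma edge_eq_sym e f : edge_eq e f = edge_eq f e.
Proof.
by rewrite /edge_eq (eq_sym f.1) (eq_sym f.2) (eq_sym f.1 e.2) (eq_sym f.2 e.1)
  (andbC (e.2 == f.1)).
Qed.

Lemma edge_eq_trans f e g : edge_eq e f -> edge_eq f g -> edge_eq e g.
Proof.
case: e f g => [a b] [c d] [x y]; rewrite /edge_eq /=.
by case/orP=> /andP[/eqP-> /eqP->] /orP[/andP[/eqP-> /eqP->]|/andP[/eqP-> /eqP->]];
  rewrite !eqxx ?orbT.
Qed.

Lemma edge_eq_swapl e f : edge_eq (swap_pair e) f = edge_eq e f.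
Proof. by rewrite /edge_eq /= orbC (andbC (e.2 == f.2)) (andbC (e.2 == f.1)). Qed.

Lemma edge_eq_fst g h : edge_eq g h -> (g.1 == h.1) || (g.1 == h.2).
Proof. by case/orP=> /andP[-> _]; rewrite ?orbT. Qed.

Lemma share_vertex_swapl e f : share_vertex (swap_pair e) f = share_vertex e f.
Proof. by rewrite /share_vertex /= orbA orbC -orbA. Qed.

Lemma count_edge_eq_congr e f E :
  edge_eq e f -> count (edge_eq e) E = count (edge_eq f) E.
Proof.
move=> ef; apply: eq_count => g; apply/idP/idP; apply: edge_eq_trans => //.
by rewrite edge_eq_sym.
Qed.

Definition rev_edges E := rev (map swap_pair E).

Lemma rev_edges_cat A B : rev_edges (A ++ B) = rev_edges B ++ rev_edges A.
Proof. by rewrite /rev_edges map_cat rev_cat. Qed.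

Lemma rev_edges_cons h E : rev_edges (h :: E) = rcons (rev_edges E) (swap_pair h).
Proof. by rewrite /rev_edges /= rev_cons. Qed.

Lemma count_edge_eq_rev_edges e E :
  count (edge_eq e) (rev_edges E) = count (edge_eq e) E.
Proof.
by rewrite count_rev count_map; apply: eq_count => f /=; rewrite !(edge_eq_sym e) edge_eq_swapl.
Qed.

Definition touches E x := has (fun h => (h.1 == x) || (h.2 == x)) E.

Lemma touches_rev_edges E x : touches (rev_edges E) x = touches E x.
Proof. by rewrite /touches has_rev has_map; apply: eq_has => h /=; rewrite orbC. Qed.

Lemma touches_cat A B x : touches (A ++ B) x = touches A x || touches B x.
Proof. exact: has_cat. Qed.

Lemma has_share_vertex g E : has (share_vertex g) E = touches E g.1 || touches E g.2.
Proof.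
rewrite /touches -has_predU; apply: eq_has => h /=.
by rewrite /share_vertex !(eq_sym g.1) !(eq_sym g.2) !orbA.
Qed.

Lemma mem_touches h E : h \in E -> touches E h.1 && touches E h.2.
Proof. by move=> hE; apply/andP; split; apply/hasP; exists h; rewrite ?eqxx ?orbT. Qed.

Definition edge_submultiset E A := forall e, count (edge_eq e) E <= count (edge_eq e) A.

Lemma edge_submultisetP E A :
  edge_submultiset E A <->
  all (fun f => has (edge_eq f) A) E /\
  forall e, e \in A -> count (edge_eq e) E <= count (edge_eq e) A.
Proof.
split=> [EA | [EA cntEA] e].
  split=> [|e _]; last exact: EA.
  apply/allP=> f fE; rewrite has_count; apply: leq_trans (EA f).
  by rewrite -has_count; apply/hasP; exists f; rewrite ?edge_eq_refl.
have [/hasP[e' e'A ee'] | eA] := boolP (has (edge_eq e) A).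
  by rewrite !(count_edge_eq_congr _ ee'); apply: cntEA.
suff -> : count (edge_eq e) E = 0 by [].
apply/eqP; rewrite -leqn0 leqNgt -has_count; apply/hasPn=> f fE; apply/negP=> ef.
case/hasP: (allP EA f fE) => g gA fg; case/hasP: eA.
by exists g; rewrite // (edge_eq_trans ef).
Qed.

Lemma edge_submultiset_catl A B E :
  edge_submultiset (A ++ B) E -> edge_submultiset A E.
Proof. by move=> ABE e; apply: leq_trans (ABE e); rewrite count_cat leq_addr. Qed.

Lemma edge_submultiset_catr A B E :
  edge_submultiset (A ++ B) E -> edge_submultiset B E.
Proof. by move=> ABE e; apply: leq_trans (ABE e); rewrite count_cat leq_addl. Qed.

Lemma edge_submultiset_rev_edges A E :
  edge_submultiset A E -> edge_submultiset (rev_edges A) E.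
Proof. by move=> AE e; rewrite count_edge_eq_rev_edges. Qed.

Lemma edge_submultiset_cat (S : pred V) A B E :
  {in A, forall g, ~~ S g.1} -> {in B, forall h, S h.1 && S h.2} ->
  edge_submultiset A E -> edge_submultiset B E -> edge_submultiset (A ++ B) E.
Proof.
move=> AS BS AE BE e; rewrite count_cat.
have [/hasP[g gA eg] | /hasPn nA] := boolP (has (edge_eq e) A); last first.
  rewrite (eq_in_count (a2 := pred0)) ?count_pred0 ?add0n ?BE //.
  by move=> f /nA /negPf.
suff -> : count (edge_eq e) B = 0 by rewrite addn0.
apply/eqP; rewrite -leqn0 leqNgt -has_count; apply/hasPn=> h hB; apply/negP=> eh.
have gh : edge_eq g h by apply: edge_eq_trans _ eh; rewrite edge_eq_sym.
case/andP: (BS h hB) => Sh1 Sh2; have := AS g gA.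
by case/orP: (edge_eq_fst gh) => /eqP->; rewrite ?Sh1 ?Sh2.
Qed.

End EdgeClasses.

Section EdgeWalks.

Variable V : eqType.
Implicit Types (x y : V) (f : V * V) (E A B : seq (V * V)).

Definition edge_verts E : seq V := flatten [seq [:: f.1; f.2] | f <- E].

Definition edge_walk (G : rel V) x E y := path G x (rcons (edge_verts E) y).

Lemma edge_verts_cat A B : edge_verts (A ++ B) = edge_verts A ++ edge_verts B.
Proof. by rewrite /edge_verts map_cat flatten_cat. Qed.

Lemma edge_verts_rev_edges E : edge_verts (rev_edges E) = rev (edge_verts E).
Proof.
rewrite /edge_verts rev_flatten /rev_edges map_rev -!map_comp.
by congr (flatten (rev _)); apply: eq_map => -[].
Qed.

Lemma size_edge_verts E : size (edge_verts E) = (size E).*2.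
Proof. by elim: E => //= f E IHE; rewrite IHE doubleS. Qed.

Lemma nth_edge_verts d f0 E m : m < size E ->
  (nth d (edge_verts E) m.*2, nth d (edge_verts E) m.*2.+1) = nth f0 E m.
Proof. by elim: E m => [|[a b] E IHE] [|m] //= /IHE. Qed.

Lemma edge_walk_cat G x A f B y :
  edge_walk G x (A ++ f :: B) y =
  [&& edge_walk G x A f.1, G f.1 f.2 & edge_walk G f.2 B y].
Proof. by rewrite /edge_walk edge_verts_cat -cat_rcons rcons_cat cat_path last_rcons. Qed.

Lemma edge_walk_rev_edges G x E y :
  symmetric G -> edge_walk G y (rev_edges E) x = edge_walk G x E y.
Proof.
move=> Gsym; rewrite /edge_walk edge_verts_rev_edges.
have := rev_path G x (rcons (edge_verts E) y).
rewrite last_rcons belast_rcons rev_cons => ->.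
by apply: eq_path => a b; rewrite /= Gsym.
Qed.

Lemma odd_edge_verts x E y m : m < size E ->
  odd_edge x (x :: rcons (edge_verts E) y) m = nth (x, x) E m.
Proof.
move=> mE; rewrite /odd_edge mul2n addn1 addn2 /= !nth_rcons size_edge_verts.
by rewrite ltn_double ltn_Sdouble mE (nth_edge_verts _ (x, x)).
Qed.

Lemma odd_edge_cons2 (d a b : V) s m : odd_edge d [:: a, b & s] m.+1 = odd_edge d s m.
Proof. by rewrite /odd_edge !mulnS !addSn. Qed.

Lemma edge_verts_odd_edges (d : V) k p : size p = k.*2.+2 ->
  p = nth d p 0 :: rcons (edge_verts (mkseq (odd_edge d p) k)) (nth d p k.*2.+1).
Proof.
elim: k p => [|k IHk] [|a [|b s]] //; first by case: s.
rewrite doubleS => -[/IHk s_eq].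
have -> : mkseq (odd_edge d [:: a, b & s]) k.+1 = (b, nth d s 0) :: mkseq (odd_edge d s) k.
  rewrite /mkseq /= (iotaDl 1 0) -map_comp.
  by congr (_ :: _); apply: eq_map => m; rewrite /= odd_edge_cons2.
by rewrite {1}s_eq.
Qed.

End EdgeWalks.

Section EvenWalks.

Variables (V : finType) (G : rel V) (es : seq (V * V)).
Implicit Types (x y : V) (E : seq (V * V)).

Definition even_walk x E y :=
  [/\ 0 < size E, edge_walk G x E y & edge_submultiset E es].

Lemma even_walk_connection x E y :
  even_walk x E y -> even_connection G es x y (size E) (x :: rcons (edge_verts E) y).
Proof.
case=> E0 walkE /edge_submultisetP[Ees cntE].
set p := x :: _; have oddE := @odd_edge_verts _ x E y.
have mapE : map (odd_edge x p) (iota 0 (size E)) = E.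
  rewrite -[RHS](mkseq_nth (x, x)); apply/eq_in_map => l.
  by rewrite mem_iota => /oddE.
have size_s : size (rcons (edge_verts E) y) = 2 * size E + 1.
  by rewrite size_rcons size_edge_verts -mul2n addn1.
split=> //; split; first by rewrite /= size_s addn1 addn2.
split=> //; split; first by rewrite /p mul2n addn1 /= nth_rcons size_edge_verts ltnn eqxx.
split; first by move=> l lE; rewrite oddE //; apply: (allP Ees); apply: mem_nth.
split=> [i ies | r].
  rewrite -(count_map (odd_edge x p) (fun f => edge_eq f _)) mapE.
  by under eq_count do rewrite edge_eq_sym; apply/cntE/mem_nth.
by rewrite -size_s; move/(pathP x): walkE => walkE /walkE.
Qed.

Lemma even_connection_walk x y k p : even_connection G es x y k p ->
  exists E, [/\ even_walk x E y, size E = k & p = x :: rcons (edge_verts E) y].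
Proof.
case=> k1 [size_p [p0 [pk [Ees [cntE adj]]]]].
set E := mkseq (odd_edge x p) k.
have defp : p = x :: rcons (edge_verts E) y.
  have size_p' : size p = k.*2.+2 by rewrite size_p -mul2n addn2.
  rewrite {1}(edge_verts_odd_edges x size_p') p0.
  by rewrite -addn1 -mul2n pk.
have size_s : size (rcons (edge_verts E) y) = 2 * k + 1.
  by move: size_p; rewrite defp /= addn2 addn1 => -[].
exists E; split; rewrite ?size_mkseq //; split; rewrite ?size_mkseq //.
  by apply/(pathP x) => r; rewrite size_s => /adj; rewrite defp; apply.
apply/edge_submultisetP; split.
  by apply/allP => f /mapP[l]; rewrite mem_iota => /andP[_ lk] ->; apply: Ees.
move=> e ees; have := cntE (index e es); rewrite index_mem nth_index // => /(_ ees).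
rewrite count_map (eq_count (a2 := fun l => edge_eq (odd_edge x p l) e)) // => l.
exact: edge_eq_sym.
Qed.

Lemma even_walk_connected x E y : even_walk x E y -> even_connected G es x y.
Proof. by move/even_walk_connection; exists (size E), (x :: rcons (edge_verts E) y). Qed.

Hypothesis Gsym : symmetric G.

Lemma even_walk_rev x E y : even_walk x E y -> even_walk y (rev_edges E) x.
Proof.
case=> E0 walkE subE; split; rewrite ?edge_walk_rev_edges //.
  by rewrite size_rev size_map.
exact: edge_submultiset_rev_edges.
Qed.

Lemma even_walk_splice_at u P1 f P2 v z Q1 h Q2 w :
  even_walk u (P1 ++ f :: P2) v -> even_walk z (Q1 ++ h :: Q2) w ->
  {in P1, forall g, ~~ touches (Q1 ++ h :: Q2) g.1} -> f.1 = h.1 ->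
  even_walk u (P1 ++ h :: Q2) w.
Proof.
move=> [_ walkP subP] [_ walkQ subQ] offQ fh.
move: walkP walkQ; rewrite !edge_walk_cat fh => /and3P[walkP1 _ _] /and3P[_ Gh walkQ2].
split; first by rewrite size_cat addnS.
  by rewrite edge_walk_cat walkP1 Gh.
apply: (edge_submultiset_cat offQ).
- by move=> h' h'Q; apply: mem_touches; rewrite mem_cat h'Q orbT.
- exact: edge_submultiset_catl subP.
- exact: edge_submultiset_catr subQ.
Qed.

Lemma even_walk_splice_after u P1 f P2 v z Q1 h Q2 w :
  even_walk u (P1 ++ f :: P2) v -> even_walk z (Q1 ++ h :: Q2) w ->
  {in rcons P1 f, forall g, ~~ touches (Q1 ++ h :: Q2) g.1} -> f.2 = h.1 ->
  even_walk u (rcons P1 f ++ rev_edges Q1) z.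
Proof.
move=> [_ walkP subP] [_ walkQ subQ] offQ fh.
move: walkP walkQ; rewrite !edge_walk_cat -fh => /and3P[walkP1 Gf _] /and3P[walkQ1 _ _].
split; first by rewrite size_cat size_rcons.
  by rewrite cat_rcons edge_walk_cat walkP1 Gf edge_walk_rev_edges.
apply: (edge_submultiset_cat offQ).
- move=> h' /mem_touches; rewrite !touches_rev_edges !touches_cat.
  by case/andP=> -> ->.
- by apply: (@edge_submultiset_catl _ _ P2); rewrite cat_rcons.
- exact/edge_submultiset_rev_edges/(edge_submultiset_catl subQ).
Qed.

Lemma even_walk_meet u P v z Q w :
  even_walk u P v -> even_walk z Q w ->
  has (fun g => has (share_vertex g) Q) P ->
  even_connected G es u z \/ even_connected G es u w.
Proof.
move=> walkP walkQ; rewrite (eq_has (fun g => has_share_vertex g Q)).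
case/split_find=> P1 [f [P2 [defP f_on /hasPn P1off]]]; subst P.
have {f_on} [x [Qx fx]] : exists x, touches Q x /\ (x = f.1 \/ x = f.2 /\ ~~ touches Q f.1).
  case f1: (touches Q f.1); first by exists f.1; split; [|left].
  by exists f.2; rewrite f1 in f_on; split; [|right].
(* Reversing the second connection exchanges z and w. *)
wlog [Q1 [h [Q2 [defQ hx]]]] : z Q w walkQ P1off Qx fx /
    exists Q1 h Q2, Q = Q1 ++ h :: Q2 /\ h.1 = x.
  move=> meet; case/hasP: (Qx) => h hQ /orP[] /eqP hx.
    by apply: meet walkQ P1off Qx fx _; case/splitPr: hQ => Q1 Q2; exists Q1, h, Q2.
  apply/or_comm/(meet _ _ _ (even_walk_rev walkQ)); rewrite ?touches_rev_edges //.
    by move=> g /P1off; rewrite !touches_rev_edges.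
  case/splitPr: hQ => Q1 Q2; exists (rev_edges Q2), (swap_pair h), (rev_edges Q1).
  by rewrite rev_edges_cat rev_edges_cons -cats1 -catA.
subst Q; have P1off_fst g : g \in P1 -> ~~ touches (Q1 ++ h :: Q2) g.1.
  by move/P1off; rewrite negb_or => /andP[].
case: fx => [fx | [fx f1off]].
  right; apply: even_walk_connected (even_walk_splice_at walkP walkQ P1off_fst _).
  by rewrite -fx hx.
left; apply: (even_walk_connected (even_walk_splice_after walkP walkQ _ _)).
  by move=> g; rewrite mem_rcons inE => /orP[/eqP-> | /P1off_fst].
by rewrite -fx hx.
Qed.

End EvenWalks.

Theorem lemma6p13 (V : finType) (G : rel V) (es : seq (V * V))
  (HG : simple_graph G)
  (Hs : 1 <= size es)
  (Hes : forall e, e \in es -> G e.1 e.2)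
  (u v z w : V) (k l : nat) (p q : seq V)
  (Hp : even_connection G es u v k p)
  (Hq : even_connection G es z w l q)
  (i j : nat) (Hi : i < k) (Hj : j < l)
  (Hcommon : share_vertex (odd_edge u p i) (odd_edge z q j)) :
  (even_connected G es u z \/ even_connected G es u w) /\
  (even_connected G es v z \/ even_connected G es v w).
Proof.
have [Gsym _] := HG.
have [P [walkP sizeP defp]] := even_connection_walk Hp.
have [Q [walkQ sizeQ defq]] := even_connection_walk Hq.
rewrite defp defq !odd_edge_verts ?sizeP ?sizeQ // in Hcommon.
have meet : has (fun g => has (share_vertex g) Q) P.
  apply/hasP; exists (nth (u, u) P i); first by rewrite mem_nth ?sizeP.
  by apply/hasP; exists (nth (z, z) Q j); first by rewrite mem_nth ?sizeQ.
split; first exact: (even_walk_meet Gsym walkP walkQ meet).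
apply: (even_walk_meet Gsym (even_walk_rev Gsym walkP) walkQ).
rewrite has_rev has_map; apply: sub_has meet => g.
by rewrite /= (eq_has (share_vertex_swapl g)).
Qed.
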